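(* In the process described in the context, for any item $j$ we have $\Pr[j\in\mathcal R_2\mid j\in\mathcal R_1]=1-o(1)$ as $k\to\infty$.
   Context: Consider a $k$-CS-PIP instance: matrix $\vec A\in[0,1]^{m\times n}$ (entries $a_{ij}$), each column having at most $k$ nonzero entries, and an optimal solution $\vec x$ of the LP $\max\{\vec w\cdot\vec x:\vec A\vec x\le\vec 1,\ \sum_{j\in\mathrm{big}(i)}x_j\le1\ \forall i,\ \vec x\in[0,1]^n\}$. Let $\alpha=k^{0.4}$, $\ell=80\log(k/\alpha)$, and for row $i$: $\mathrm{big}(i)=\{j:a_{ij}>1/2\}$, $\mathrm{med}(i)=\{j:1/\ell\le a_{ij}\le 1/2\}$, $\mathrm{tiny}(i)=\{j:0<a_{ij}<1/\ell\}$. Let $\mathcal R_0$ contain each item $j$ independently with probability $\alpha x_j/k$. For $j\in\mathcal R_0$: a medium blocking event occurs for $j$ if some row $i$ with $j\in\mathrm{med}(i)$ has $|\mathrm{med}(i)\cap\mathcal R_0|\ge 3$; a tiny blocking event occurs for $j$ if some row $i$ with $j\in\mathrm{tiny}(i)$ has $\sum_{j'\ne j,\ j'\in(\mathrm{med}(i)\cup\mathrm{tiny}(i))\cap\mathcal R_0}a_{ij'}>1-a_{ij}$ or $|\mathrm{med}(i)\cap\mathcal R_0|\ge2$. Let $\mathcal R_1$ be the items of $\mathcal R_0$ for which neither event occurs. Build a directed graph $G$ on vertex set $\mathcal R_1$ with an edge $j\to j'$ ($j'\ne j$) iff there is a row $i$ with $a_{ij}>0$ and $a_{ij'}>1/2$.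 Let $d=\alpha+\sqrt{\alpha\log\alpha}$ and let $\mathcal R_2$ be the set of items of $\mathcal R_1$ whose out-degree in $G$ is at most $d$. *)

From HB Require Import structures.
From mathcomp Require Import all_boot all_order all_algebra.
From mathcomp Require Import all_classical all_reals all_analysis.
Set Implicit Arguments. Unset Strict Implicit. Unset Printing Implicit Defensive.
Import Order.TTheory GRing.Theory Num.Theory.
Local Open Scope ring_scope.

Section CSPIP.
Variables (R : realType) (k m n : nat).
Implicit Types (A : 'M[R]_(m, n)) (w x : 'I_n -> R) (S : {set 'I_n}).

Definition alpha : R := powR (k%:R) (2 / 5).
Definition ell : R := 80 * ln (k%:R / alpha).
Definition dbound : R := alpha + Num.sqrt (alpha * ln alpha).

Definition cs_instance A : Prop :=
  (forall i j, 0 <= A i j <= 1) /\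
  (forall j : 'I_n, (#|[set i : 'I_m | A i j != 0%R]| <= k)%N).

Definition big_set A (i : 'I_m) : {set 'I_n} := [set j | 1 / 2 < A i j].
Definition med_set A (i : 'I_m) : {set 'I_n} := [set j | (1 / ell <= A i j) && (A i j <= 1 / 2)].
Definition tiny_set A (i : 'I_m) : {set 'I_n} := [set j | (0 < A i j) && (A i j < 1 / ell)].

Definition lp_feasible A (y : 'I_n -> R) : Prop :=
  (forall j, 0 <= y j <= 1) /\
  (forall i : 'I_m, \sum_(j < n) A i j * y j <= 1) /\
  (forall i : 'I_m, \sum_(j in big_set A i) y j <= 1).

Definition lp_optimal A w x : Prop :=
  lp_feasible A x /\
  forall y, lp_feasible A y -> \sum_(j < n) w j * y j <= \sum_(j < n) w j * x j.

(* R0 contains each item j independently with probability alpha x_j / k *)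
Definition pinc x (j : 'I_n) : R := alpha * x j / k%:R.
Definition probR0 x S : R :=
  (\prod_(j in S) pinc x j) * (\prod_(j in ~: S) (1 - pinc x j)).
Definition prob x (E : {set 'I_n} -> bool) : R :=
  \sum_(S : {set 'I_n} | E S) probR0 x S.

Definition med_block A S (j : 'I_n) : bool :=
  [exists i : 'I_m, (j \in med_set A i) && (3 <= #|med_set A i :&: S|)%N].
Definition tiny_block A S (j : 'I_n) : bool :=
  [exists i : 'I_m, (j \in tiny_set A i) &&
     ((1 - A i j < \sum_(j' in (med_set A i :|: tiny_set A i) :&: S | j' != j) A i j')
      || (2 <= #|med_set A i :&: S|)%N)].

Definition R1 A S : {set 'I_n} :=
  [set j in S | ~~ med_block A S j && ~~ tiny_block A S j].

Definition out_nbrs A S (j : 'I_n) : {set 'I_n} :=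
  [set j' in R1 A S | (j' != j) && [exists i : 'I_m, (0 < A i j) && (1 / 2 < A i j')]].

Definition R2 A S : {set 'I_n} :=
  [set j in R1 A S | #|out_nbrs A S j|%:R <= dbound].

End CSPIP.

(* If [j] lies in [R1] but not in [R2], more than [d] items of [R0] are
   out-neighbours of [j] in the graph on all items.  By column sparsity and the
   big-row LP constraints these neighbours have total sampling probability at
   most [alpha].  Adding items to [R0] can only create blocking events, so
   [{j \in R1}] is decreasing in them while [(1 + t)^|R0 :&: nbrs|] is
   increasing; a Harris-type inequality then bounds the conditional moment
   generating function by [exp (t alpha)], and a Chernoff bound with
   [t = sqrt (alpha ln alpha) / (2 alpha)] yields
   [Pr[j \in R1 \ R2] <= alpha^(-1/6) Pr[j \in R1]]. *)

From Pilot Require Import Defs.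
From HB Require Import structures.
From mathcomp Require Import all_boot all_order all_algebra.
From mathcomp Require Import all_classical all_reals all_analysis.
From mathcomp Require Import ring lra.

Set Implicit Arguments. Unset Strict Implicit. Unset Printing Implicit Defensive.
Import Order.TTheory GRing.Theory Num.Theory.
Local Open Scope ring_scope.

Section ProductMeasure.
Variables (R : realType) (T : finType) (p : T -> R).
Implicit Types (a : T) (S V : {set T}) (F G : {set T} -> R).
Hypothesis p01 : forall a, 0 <= p a <= 1.

Definition weight (S : {set T}) : R :=
  \prod_(a in S) p a * \prod_(a in ~: S) (1 - p a).

Definition expect (F : {set T} -> R) : R := \sum_S weight S * F S.

Lemma weight_ge0 S : 0 <= weight S.
Proof.
apply: mulr_ge0; apply: prodr_ge0 => a _; case/andP: (p01 a) => // _ pa_le1.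
by rewrite subr_ge0.
Qed.

Lemma expect_ge0 F : (forall S, 0 <= F S) -> 0 <= expect F.
Proof. by move=> F0; apply: sumr_ge0 => S _; rewrite mulr_ge0 ?weight_ge0. Qed.

Lemma expect_le F G : (forall S, F S <= G S) -> expect F <= expect G.
Proof. by move=> FG; apply: ler_sum => S _; rewrite ler_wpM2l ?weight_ge0. Qed.

Lemma expectZ c F : expect (fun S => c * F S) = c * expect F.
Proof. by rewrite /expect mulr_sumr; apply: eq_bigr => S _; rewrite mulrCA. Qed.

Lemma weight_setU1 a S : a \notin S -> (1 - p a) * weight (a |: S) = p a * weight S.
Proof.
move=> aS; rewrite /weight big_setU1 //= (big_setD1 a (_ : a \in ~: S)) ?inE //=.
have -> : ~: (a |: S) = ~: S :\ a by apply/setP => b; rewrite !inE negb_or andbC.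
ring.
Qed.

Lemma sum_set_mem a G :
  \sum_(S : {set T} | a \in S) G S = \sum_(S : {set T} | a \notin S) G (a |: S).
Proof.
rewrite (reindex_onto (fun S => a |: S) (fun S => S :\ a)) /=; last first.
  by move=> S aS; rewrite finset.setD1K.
apply: eq_bigl => S; rewrite setU11 /=; apply/eqP/idP => [<-|aS].
  by rewrite !inE eqxx.
by rewrite finset.setU1K.
Qed.

Lemma sum_set_split a G :
  \sum_(S : {set T}) G S = \sum_(S : {set T} | a \notin S) (G (a |: S) + G S).
Proof. by rewrite (bigID (fun S => a \in S)) /= sum_set_mem big_split. Qed.

(* Harris' inequality for a single coordinate: the indicator of [a \in S]
   is increasing, [F] is decreasing in [a]. *)
Lemma expect_mem_le a F : (forall S, a \notin S -> F (a |: S) <= F S) ->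
  expect (fun S => (a \in S)%:R * F S) <= p a * expect F.
Proof.
move=> Fdec; rewrite /expect (sum_set_split a) [X in _ <= _ * X](sum_set_split a).
rewrite mulr_sumr; apply: ler_sum => S aS.
rewrite setU11 (negbTE aS) mul1r mul0r mulr0 addr0.
have /andP[pa0 _] := p01 a.
have := congr1 ( *%R^~ (F (a |: S))) (weight_setU1 aS) => /= WU.
have : 0 <= p a * weight S * (F S - F (a |: S)).
  by apply: mulr_ge0; [rewrite mulr_ge0 ?weight_ge0|rewrite subr_ge0 Fdec].
lra.
Qed.

Lemma cardsI_setU1 a S V : a \notin V -> #|S :&: (a |: V)| = ((a \in S) + #|S :&: V|)%N.
Proof.
move=> aV; case: (boolP (a \in S)) => aS.
  have -> : S :&: (a |: V) = a |: (S :&: V).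
    by apply/setP => b; rewrite !inE; case: eqVneq => [->|_]; rewrite ?aS.
  by rewrite cardsU1 inE (negbTE aV) andbF.
rewrite add0n; apply: eq_card => b; rewrite !inE.
by case: eqVneq => [->|_]; rewrite ?(negbTE aS).
Qed.

Section Harris.
Variables (t : R) (g : {set T} -> R).
Hypotheses (t_ge0 : 0 <= t) (g_ge0 : forall S, 0 <= g S).

Lemma expect_pow_cardI_setU1 a V : a \notin V ->
  (forall S, a \notin S -> g (a |: S) <= g S) ->
  expect (fun S => (1 + t) ^+ #|S :&: (a |: V)| * g S) <=
  (1 + t * p a) * expect (fun S => (1 + t) ^+ #|S :&: V| * g S).
Proof.
move=> aV gdec; set G := fun S => (1 + t) ^+ #|S :&: V| * g S.
have -> : expect (fun S => (1 + t) ^+ #|S :&: (a |: V)| * g S) =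
          expect G + t * expect (fun S => (a \in S)%:R * G S).
  rewrite /expect mulr_sumr -big_split; apply: eq_bigr => S _.
  by rewrite /G cardsI_setU1 //; case: (a \in S); rewrite ?exprS /=; ring.
have G_ge0 S : 0 <= G S.
  by apply: mulr_ge0 => //; apply: exprn_ge0; rewrite addr_ge0.
have Gdec S : a \notin S -> G (a |: S) <= G S.
  move=> aS; rewrite /G finset.setIUl (_ : [set a] :&: V = finset.set0) ?finset.set0U.
    by rewrite ler_wpM2l ?gdec ?exprn_ge0 ?addr_ge0.
  by apply/setP => b; rewrite !inE; case: eqP => // ->; rewrite (negbTE aV).
have := ler_wpM2l t_ge0 (expect_mem_le Gdec); nra.
Qed.

Lemma expect_pow_cardI_le V :
  (forall a S, a \in V -> a \notin S -> g (a |: S) <= g S) ->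
  expect (fun S => (1 + t) ^+ #|S :&: V| * g S) <= \prod_(a in V) (1 + t * p a) * expect g.
Proof.
elim: {V}#|V| {-2}V (erefl #|V|) => [|N IH] V cardV gdec.
  have -> : V = finset.set0 by apply/eqP; rewrite -cards_eq0 cardV.
  by rewrite finset.big_set0 mul1r; apply: expect_le => S; rewrite finset.setI0 cards0 mul1r.
have [a aV] : exists a, a \in V by apply/set0Pn; rewrite -cards_eq0 cardV.
have aV' : a \notin V :\ a by rewrite setD11.
rewrite -(finset.setD1K aV) big_setU1 //= -mulrA.
apply: le_trans (expect_pow_cardI_setU1 aV' (fun S => gdec a S aV)) _.
apply: ler_wpM2l; first by have /andP[pa0 _] := p01 a; rewrite addr_ge0 ?mulr_ge0.
apply: IH => [|b S /setD1P[_ bV]]; last exact: gdec.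
by move: cardV; rewrite (cardsD1 a) aV => -[].
Qed.

End Harris.

Lemma sum_weight_le_expect (P : pred {set T}) h : (forall S, 0 <= h S) ->
  (forall S, P S -> 1 <= h S) -> \sum_(S | P S) weight S <= expect h.
Proof.
move=> h0 h1; rewrite /expect [X in _ <= X](bigID P) /= -[X in X <= _]addr0.
apply: lerD; last by apply: sumr_ge0 => S _; rewrite mulr_ge0 ?weight_ge0.
by apply: ler_sum => S PS; rewrite ler_peMr ?weight_ge0 ?h1.
Qed.

End ProductMeasure.

Lemma prod_1DM_le_expR (R : realType) (T : finType) (V : {set T}) (p : T -> R) t :
  0 <= t -> (forall a, 0 <= p a) ->
  \prod_(a in V) (1 + t * p a) <= expR (t * \sum_(a in V) p a).
Proof.
move=> t_ge0 p_ge0; rewrite mulr_sumr expR_sum; apply: ler_prod => a _.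
by rewrite expR_ge1Dx addr_ge0 ?mulr_ge0.
Qed.

Lemma chernoff_pointwise (R : realType) (t c d : R) (N : nat) :
  0 <= c -> expR c <= 1 + t -> d < N%:R -> 1 <= expR (- (c * d)) * (1 + t) ^+ N.
Proof.
move=> c_ge0 ect dN; have ec_ge0 := expR_ge0 c.
apply: (@le_trans _ _ (expR (- (c * d)) * expR (c * N%:R))); last first.
  rewrite ler_wpM2l ?expR_ge0 // expRM_natr lerXn2r // nnegrE; lra.
rewrite -expRD -[leLHS]expR0 ler_expR; nra.
Qed.

(* [t] and [c] are tuned so that [e^c <= 1 + t] and the Chernoff exponent
   [t a - c (a + d)] equals [- d^2 / (2 (2 a + d))]. *)
Lemma chernoff_params (R : realType) (a L d : R) :
  1 <= a -> 0 <= L <= a -> 0 <= d -> d ^+ 2 = a * L -> exists t c : R,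
  [/\ 0 <= t, 0 <= c, expR c <= 1 + t & t * a - c * (a + d) <= - (L / 6)].
Proof.
move=> a_ge1 /andP[L_ge0 L_le] d_ge0 dd.
have d_le : d <= a by nra.
exists (d / (2 * a)), (d / (2 * a + d)); split.
- by rewrite divr_ge0 //; lra.
- by rewrite divr_ge0 //; lra.
- set c := d / (2 * a + d).
  have inv : (1 + d / (2 * a)) * (1 - c) = 1.
    by rewrite /c; field; apply/andP; split; apply: lt0r_neq0; lra.
  have c_lt1 : c < 1 by rewrite /c ltr_pdivrMr; lra.
  have := expR_ge1Dx (- c); have := expRxMexpNx_1 c; have := expR_gt0 c; nra.
- have -> : d / (2 * a) * a - d / (2 * a + d) * (a + d) = - (a * L) / (2 * (2 * a + d)).
    by rewrite -dd; field; apply/andP; split; apply: lt0r_neq0; lra.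
  rewrite mulNr lerN2 ler_pdivlMr; last lra.
  nra.
Qed.

Lemma chernoff_params_ln (R : realType) (a : R) : 1 <= a -> exists t c : R,
  [/\ 0 <= t, 0 <= c, expR c <= 1 + t &
      t * a - c * (a + Num.sqrt (a * ln a)) <= - (ln a / 6)].
Proof.
move=> a_ge1; apply: chernoff_params => //.
- by rewrite ln_ge0 //=; have := @le_ln1Dx R (a - 1); rewrite subrKC; lra.
- by rewrite sqr_sqrtr // mulr_ge0 ?ln_ge0 //; lra.
Qed.

Lemma expRN_inv_le (R : realType) (eps : R) : 0 < eps -> expR (- eps^-1) <= eps.
Proof.
move=> eps_gt0; rewrite expRN -[leRHS]invrK lef_pV2 ?posrE ?expR_gt0 ?invr_gt0 //.
by apply: le_trans (expR_ge1Dx _); lra.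
Qed.

Section Alpha.
Variables (R : realType) (k : nat).
Hypothesis k_ge1 : 1 <= (k%:R : R).

Lemma alpha_ge1 : 1 <= alpha R k.
Proof. by rewrite /alpha -[leLHS](powRr0 k%:R) ler_powR //; lra. Qed.

Lemma alpha_le_k : alpha R k <= k%:R.
Proof. by rewrite /alpha ler1_powR //; lra. Qed.

End Alpha.

Lemma ln_alpha (R : realType) (k : nat) : ln (alpha R k) = 2 / 5 * ln (k%:R : R).
Proof. by rewrite /alpha ln_powR. Qed.

Section Sampling.
Variables (R : realType) (k n : nat).
Implicit Types (x : 'I_n -> R) (E : {set 'I_n} -> bool).

Lemma probE x E : prob k x E = expect (pinc k x) (fun S => (E S)%:R).
Proof.
rewrite /prob /expect big_mkcond /=; apply: eq_bigr => S _.
by case: (E S); rewrite ?mulr1 ?mulr0.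
Qed.

Lemma pinc01 x : 1 <= (k%:R : R) -> (forall j, 0 <= x j <= 1) ->
  forall j, 0 <= pinc k x j <= 1.
Proof.
move=> k_ge1 x01 j; have /andP[xj_ge0 xj_le1] := x01 j.
have := alpha_ge1 k_ge1; have := alpha_le_k k_ge1 => alpha_le alpha_ge.
rewrite /pinc; apply/andP; split.
  by apply: divr_ge0; [apply: mulr_ge0|]; lra.
by rewrite ler_pdivrMr ?mul1r; [nra|lra].
Qed.

Lemma prob_ge0 x E :
  1 <= (k%:R : R) -> (forall j, 0 <= x j <= 1) -> 0 <= prob k x E.
Proof.
move=> k_ge1 x01; rewrite probE; apply: (expect_ge0 (pinc01 k_ge1 x01)) => S.
exact: ler0n.
Qed.

End Sampling.

Section Instance.
Variables (R : realType) (k m n : nat) (A : 'M[R]_(m, n)).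
Hypothesis A_ge0 : forall i j, 0 <= A i j.
Implicit Types (S : {set 'I_n}) (a j : 'I_n) (x : 'I_n -> R).

Lemma med_blockS S S' j : S \subset S' -> med_block k A S j -> med_block k A S' j.
Proof.
move=> sSS' /existsP[i /andP[ji h]]; apply/existsP; exists i; rewrite ji.
by apply: leq_trans h _; rewrite subset_leq_card // finset.setIS.
Qed.

Lemma tiny_blockS S S' j : S \subset S' -> tiny_block k A S j -> tiny_block k A S' j.
Proof.
move=> sSS' /existsP[i /andP[ji /orP h]]; apply/existsP; exists i; rewrite ji /=.
case: h => h; apply/orP; [left|right]; last first.
  by apply: leq_trans h _; rewrite subset_leq_card // finset.setIS.
apply: lt_le_trans h _; rewrite [leLHS]big_mkcond [leRHS]big_mkcond /=.
apply: ler_sum => b _; case: ifP => [/andP[bS ->]|_].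
  by rewrite (fintype.subsetP (finset.setIS _ sSS') _ bS).
by case: ifP => // _; apply: A_ge0.
Qed.

Lemma mem_R1_setU1 a S j : a != j -> j \in R1 k A (a |: S) -> j \in R1 k A S.
Proof.
move=> aj; rewrite !inE => /andP[/orP jaS /andP[med tiny]].
have jS : j \in S by case: jaS => // /eqP ja; rewrite ja eqxx in aj.
have sS : S \subset a |: S by exact: finset.subsetUr.
by rewrite jS (contra (med_blockS sS) med) (contra (tiny_blockS sS) tiny).
Qed.

Definition all_out_nbrs j : {set 'I_n} :=
  [set a | (a != j) && [exists i, (0 < A i j) && (1 / 2 < A i a)]].

Lemma out_nbrs_sub S j : out_nbrs k A S j \subset S :&: all_out_nbrs j.
Proof.
by apply/fintype.subsetP => b; rewrite !inE => /andP[/andP[-> _] ->].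
Qed.

Lemma sum_all_out_nbrs_le (y : 'I_n -> R) j :
  cs_instance k A -> (forall a, 0 <= y a) ->
  (forall i, \sum_(a in Defs.big_set A i) y a <= 1) ->
  \sum_(a in all_out_nbrs j) y a <= k%:R.
Proof.
move=> [_ sparse] y_ge0 big_le1; set I0 := [set i | A i j != 0].
apply: (@le_trans _ _
  (\sum_(a in all_out_nbrs j) \sum_(i in I0) (a \in Defs.big_set A i)%:R * y a)).
  apply: ler_sum => a; rewrite inE => /andP[_ /existsP[i /andP[Aij Aia]]].
  rewrite (bigD1 i) /=; last by rewrite inE gt_eqF.
  rewrite inE Aia mul1r lerDl; apply: sumr_ge0 => i' _; apply: mulr_ge0 => //.
apply: (@le_trans _ _ (\sum_(i in I0) 1)); last by rewrite sumr_const ler_nat sparse.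
rewrite exchange_big /=; apply: ler_sum => i _; apply: le_trans (big_le1 i).
rewrite big_mkcond [leRHS]big_mkcond /=; apply: ler_sum => a _.
by case: (a \in all_out_nbrs j); case: (a \in Defs.big_set A i); rewrite ?mul1r ?mul0r ?y_ge0.
Qed.

Lemma sum_pinc_all_out_nbrs_le x j :
  cs_instance k A -> lp_feasible A x -> 1 <= (k%:R : R) ->
  \sum_(a in all_out_nbrs j) pinc k x a <= alpha R k.
Proof.
move=> csA [x01 [_ big_le1]] k_ge1.
have x_ge0 a : 0 <= x a by case/andP: (x01 a).
have := sum_all_out_nbrs_le j csA x_ge0 big_le1; have := alpha_ge1 k_ge1 => alpha_ge1 sum_le.
under eq_bigr do rewrite /pinc mulrAC.
by rewrite -mulr_sumr mulrAC ler_pdivrMr; [nra|lra].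
Qed.

Lemma prob_R1E x j : prob k x (fun S => j \in R1 k A S) =
  prob k x (fun S => j \in R2 k A S) +
  prob k x (fun S => (j \in R1 k A S) && (j \notin R2 k A S)).
Proof.
rewrite /prob (bigID (fun S => j \in R2 k A S)) /=; congr (_ + _).
apply: eq_bigl => S; apply/andP/idP => [[] //|jR2]; split=> //.
by move: jR2; rewrite inE => /andP[].
Qed.

Lemma prob_R1_notR2_le x j :
  cs_instance k A -> lp_feasible A x -> 1 <= (k%:R : R) ->
  prob k x (fun S => (j \in R1 k A S) && (j \notin R2 k A S)) <=
  expR (- (ln (alpha R k) / 6)) * prob k x (fun S => j \in R1 k A S).
Proof.
move=> csA feas k_ge1; have p01 := pinc01 k_ge1 feas.1.
have [t [c [t_ge0 c_ge0 ec_le exponent_le]]] := chernoff_params_ln (alpha_ge1 k_ge1).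
pose g S : R := (j \in R1 k A S)%:R.
have g_ge0 S : 0 <= g S by rewrite ler0n.
have g_dec a S : a \in all_out_nbrs j -> a \notin S -> g (a |: S) <= g S.
  rewrite inE => /andP[aj _] _; rewrite /g.
  by case: (boolP (j \in R1 k A (a |: S))) => [/(mem_R1_setU1 aj)->|].
have tail : prob k x (fun S => (j \in R1 k A S) && (j \notin R2 k A S)) <=
    expect (pinc k x)
      (fun S => expR (- (c * dbound R k)) * ((1 + t) ^+ #|S :&: all_out_nbrs j| * g S)).
  apply: (sum_weight_le_expect p01) => S.
    by rewrite mulr_ge0 ?expR_ge0 // mulr_ge0 // exprn_ge0 // addr_ge0.
  move=> /andP[jR1 jR2]; rewrite /g jR1 mulr1; apply: chernoff_pointwise => //.
  move: jR2; rewrite inE jR1 /= -ltNge => /lt_le_trans; apply.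
  by rewrite ler_nat subset_leq_card ?out_nbrs_sub.
apply: le_trans tail _; rewrite probE expectZ.
apply: le_trans (ler_wpM2l (expR_ge0 _) (expect_pow_cardI_le p01 t_ge0 g_ge0 g_dec)) _.
rewrite mulrA ler_wpM2r ?(expect_ge0 p01) //.
have p_ge0 a : 0 <= pinc k x a by case/andP: (p01 a).
apply: le_trans (ler_wpM2l (expR_ge0 _) (prod_1DM_le_expR (all_out_nbrs j) t_ge0 p_ge0)) _.
rewrite -expRD ler_expR /dbound.
have := ler_wpM2l t_ge0 (sum_pinc_all_out_nbrs_le j csA feas k_ge1); lra.
Qed.

End Instance.

Theorem lemma2 (R : realType) (eps : R) : 0 < eps ->
  exists K : nat, forall k : nat, (K <= k)%N ->
  forall (m n : nat) (A : 'M[R]_(m, n)) (w x : 'I_n -> R),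
    cs_instance k A -> lp_optimal A w x ->
    forall j : 'I_n,
      (1 - eps) * prob k x (fun S => j \in R1 k A S)
        <= prob k x (fun S => j \in R2 k A S).
Proof.
move=> eps_gt0.
exists (Num.truncn (expR (15 / eps))).+1 => k leKk m n A w x csA [feas _] j.
have k_large : expR (15 / eps) <= k%:R.
  by apply/ltW/(lt_le_trans (truncnS_gt _)); rewrite ler_nat.
have k_ge1 : 1 <= (k%:R : R).
  by apply: le_trans k_large; rewrite -expR0 ler_expR divr_ge0 //; lra.
have decay : expR (- (ln (alpha R k) / 6)) <= eps.
  have : 15 / eps <= ln (k%:R : R) by rewrite -[leLHS]expRK ler_ln ?posrE ?expR_gt0 //; lra.
  move=> ln_k; apply: le_trans (expRN_inv_le eps_gt0).
  by rewrite ler_expR lerN2 ln_alpha; lra.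
have A_ge0 i j' : 0 <= A i j' by case/andP: (csA.1 i j').
have := prob_R1_notR2_le A_ge0 j csA feas k_ge1.
have := prob_ge0 (fun S => j \in R1 k A S) k_ge1 feas.1.
rewrite prob_R1E; nra.
Qed.
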